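(* Let $\alpha>0$ and $\sigma>0$, and let $\pi_{\alpha,\sigma}$, $(c_n)_{n\ge0}$, $\mathbb F_\sigma(\mathbb C)$ and $\mathcal S$ be as in the context. Then for each $f\in L^2(\alpha\mathbb N_0,\pi_{\alpha,\sigma})$ and each $z\in\mathbb C$, $$(\mathcal Sf)(z)=\int_{\alpha\mathbb N_0} f\,d\pi_{\alpha,\sigma+\alpha z}=\exp\Big(-\frac{\sigma+\alpha z}{\alpha^2}\Big)\sum_{n=0}^\infty f(\alpha n)\,\frac{1}{n!}\Big(\frac{\sigma+\alpha z}{\alpha^2}\Big)^n .$$ In particular, for real $z>-\sigma/\alpha$ the integration is with respect to the probability distribution $\pi_{\alpha,\sigma+\alpha z}$. Moreover, the complex-valued series on the right-hand side converges absolutely and uniformly on compact subsets of $\mathbb C$.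
   Context: For $\alpha>0$ and $w\in\mathbb C$, $\pi_{\alpha,w}$ denotes the complex-valued measure on $\alpha\mathbb N_0=\{0,\alpha,2\alpha,\dots\}$ given by $\pi_{\alpha,w}=\exp(-w/\alpha^2)\sum_{n=0}^\infty \frac{1}{n!}(w/\alpha^2)^n\delta_{\alpha n}$, where $\delta_y$ is the Dirac measure at $y$; for $w>0$ this is a probability measure (for $\alpha=1$ the Poisson distribution with parameter $w$). Fix $\sigma>0$. Let $(c_n)_{n\ge0}$ be the monic polynomial sequence orthogonal with respect to $\pi_{\alpha,\sigma}$; its exponential generating function is $\sum_{n\ge0}\frac{t^n}{n!}c_n(z)=\exp\big(\frac z\alpha\log(1+t\alpha)-\frac{\sigma t}{\alpha}\big)$, and $\|c_n\|^2_{L^2(\alpha\mathbb N_0,\pi_{\alpha,\sigma})}=n!\,\sigma^n$. The Bargmann space $\mathbb F_\sigma(\mathbb C)$ is the Hilbert space of entire functions $f(z)=\sum_n f_nz^n$ with $\sum_n|f_n|^2n!\sigma^n<\infty$, with inner product $(f,g)=\sum_n f_n\overline{g_n}\,n!\,\sigma^n$. The generalized Segal--Bargmann transform $\mathcal S:L^2(\alpha\mathbb N_0,\pi_{\alpha,\sigma})\to\mathbb F_\sigma(\mathbb C)$ is the unitary operator with $(\mathcal Sc_n)(z)=z^n$ for all $n\in\mathbb N_0$. *)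

From Stdlib Require Import Reals List Arith Factorial.
From Coquelicot Require Import Coquelicot.

Open Scope R_scope.

(* Sum of a complex series (componentwise Coquelicot [Series]; equals the
   sum whenever the series converges). *)
Definition CSeries (a : nat -> Complex.C) : Complex.C :=
  (Series (fun n => fst (a n)), Series (fun n => snd (a n))).

Definition Cexp (w : Complex.C) : Complex.C :=
  CSeries (fun n => Cdiv (Cpow w n) (RtoC (INR (Factorial.fact n)))).

(* Mass of the complex measure pi_{alpha,w} at the point alpha*k :
   exp(-w/alpha^2) (w/alpha^2)^k / k!. *)
Definition pi_mass (alpha : R) (w : Complex.C) (k : nat) : Complex.C :=
  Cmult (Cexp (Copp (Cdiv w (RtoC (alpha ^ 2)))))
        (Cdiv (Cpow (Cdiv w (RtoC (alpha ^ 2))) k) (RtoC (INR (Factorial.fact k)))).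

Definition monic_poly (a : nat -> nat -> R) (n : nat) (x : R) : R :=
  x ^ n + fold_right Rplus 0 (map (fun k => a n k * x ^ k) (seq 0 n)).

Definition orthogonal_wrt (alpha sigma : R) (c : nat -> R -> R) : Prop :=
  forall n m : nat, n <> m ->
    is_series (fun k => Cmult (RtoC (c n (alpha * INR k) * c m (alpha * INR k)))
                              (pi_mass alpha (RtoC sigma) k)) (RtoC 0).

(* A function on alpha*N_0 is represented by f : nat -> C, f k = f(alpha k).
   Membership in L^2(alpha N_0, pi_{alpha,sigma}). *)
Definition in_L2 (alpha sigma : R) (f : nat -> Complex.C) : Prop :=
  ex_series (fun k => Cmod (f k) ^ 2 * fst (pi_mass alpha (RtoC sigma) k)).

Definition coef (alpha sigma : R) (c : nat -> R -> R) (f : nat -> Complex.C)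
  (n : nat) : Complex.C :=
  Cdiv (CSeries (fun k => Cmult (Cmult (f k) (RtoC (c n (alpha * INR k))))
                                (pi_mass alpha (RtoC sigma) k)))
       (CSeries (fun k => Cmult (RtoC (c n (alpha * INR k) ^ 2))
                                (pi_mass alpha (RtoC sigma) k))).

(* Generalized Segal--Bargmann transform: the unitary map with S c_n = z^n,
   i.e. S (sum_n a_n c_n) = sum_n a_n z^n. *)
Definition SB_transform (alpha sigma : R) (c : nat -> R -> R)
  (f : nat -> Complex.C) (z : Complex.C) : Complex.C :=
  CSeries (fun n => Cmult (coef alpha sigma c f n) (Cpow z n)).

Definition rhs_term (alpha sigma : R) (f : nat -> Complex.C) (z : Complex.C)
  (n : nat) : Complex.C :=
  let w := Cplus (RtoC sigma) (Cmult (RtoC alpha) z) in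
  Cmult (f n) (Cdiv (Cpow (Cdiv w (RtoC (alpha ^ 2))) n) (RtoC (INR (Factorial.fact n)))).

(* Write [lam = sigma / alpha^2] and [C_n] for the monic Charlier polynomials of the Poisson
   law of parameter [lam].  With [Δ] the forward difference in [k], [c_n(alpha k) - alpha^n C_n(k)]
   is killed by [Δ^n], hence (by induction on [n]) orthogonal to [c_n] and to [C_n], hence to
   itself: [c_n(alpha k) = alpha^n C_n(k)], and summation by parts gives [||C_n||^2 = lam^n n!].
   Consequently [coef f n * z^n = sum_k f(k) pi_lam(k) C_n(k) u^n / n!] with [u = alpha z / sigma].
   Summing over [n] first instead, the generating function
   [sum_n C_n(k) u^n / n! = (1 + u)^k e^(-lam u)] and [lam (1 + u) = (sigma + alpha z) / alpha^2]
   turn the [k]-th column into [f(k) pi_(alpha, sigma + alpha z)(alpha k)].  The interchange is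
   legitimate because [f] in L^2 makes [sum_k |f(k)| r^k / k!] finite for every [r] (AM-GM against
   the Poisson weights), which also gives absolute and locally uniform convergence of the
   right-hand side. *)

From Stdlib Require Import Reals List Lra Lia Factorial Arith.
From Coquelicot Require Import Coquelicot.
Open Scope R_scope.

Lemma sum_n_fst (a : nat -> C) n : fst (sum_n a n) = sum_n (fun k => fst (a k)) n.
Proof. induction n as [|n IH]; [rewrite !sum_O | rewrite !sum_Sn, <- IH]; reflexivity. Qed.

Lemma sum_n_snd (a : nat -> C) n : snd (sum_n a n) = sum_n (fun k => snd (a k)) n.
Proof. induction n as [|n IH]; [rewrite !sum_O | rewrite !sum_Sn, <- IH]; reflexivity. Qed.

Lemma is_series_C_iff (a : nat -> C) (l : C) :
  is_series a l <->
  is_series (fun k => fst (a k)) (fst l) /\ is_series (fun k => snd (a k)) (snd l).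
Proof.
  split.
  - intros H. pose proof (proj1 (filterlim_locally _ _) H) as H'.
    split; apply (proj2 (filterlim_locally _ _)); intros eps;
      generalize (H' eps); apply filter_imp; intros n [H1 H2];
      [rewrite <- sum_n_fst | rewrite <- sum_n_snd]; assumption.
  - intros [H1 H2]. apply (proj2 (filterlim_locally _ _)). intros eps.
    generalize (filter_and _ _ (proj1 (filterlim_locally _ _) H1 eps)
                                (proj1 (filterlim_locally _ _) H2 eps)).
    apply filter_imp. intros n [h1 h2].
    split; [rewrite sum_n_fst | rewrite sum_n_snd]; assumption.
Qed.

Lemma CSeries_unique (a : nat -> C) (l : C) : is_series a l -> CSeries a = l.
Proof.
  intros [H1 H2]%is_series_C_iff. unfold CSeries.
  rewrite (is_series_unique _ _ H1), (is_series_unique _ _ H2). destruct l; reflexivity.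
Qed.

Lemma CSeries_ext (a b : nat -> C) : (forall n, a n = b n) -> CSeries a = CSeries b.
Proof.
  intros H. unfold CSeries.
  rewrite (Series_ext _ (fun n => fst (b n))), (Series_ext (fun n => snd (a n)) (fun n => snd (b n)));
    [reflexivity | intros n; rewrite H; reflexivity ..].
Qed.

Lemma is_series_R_ext (a b : nat -> R) (l : R) :
  (forall n, a n = b n) -> is_series a l -> is_series b l.
Proof. exact (is_series_ext a b l). Qed.

Lemma ex_series_R_ext (a b : nat -> R) :
  (forall n, a n = b n) -> ex_series a -> ex_series b.
Proof. exact (ex_series_ext a b). Qed.

Lemma is_series_C_ext (a b : nat -> C) (l : C) :
  (forall n, a n = b n) -> is_series a l -> is_series b l.
Proof. exact (is_series_ext a b l). Qed.

Lemma is_series_C_abs (a : nat -> C) :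
  ex_series (fun n => Cmod (a n)) -> is_series a (CSeries a).
Proof.
  intros Habs.
  destruct (@ex_series_le C_AbsRing C_CompleteNormedModule a (fun n => Cmod (a n))) as [l Hl];
    [intros n; apply Rle_refl | exact Habs |].
  rewrite (CSeries_unique a l Hl). exact Hl.
Qed.

Lemma is_series_R0 : is_series (fun _ : nat => 0) 0.
Proof.
  change (is_lim_seq (sum_n (fun _ : nat => 0)) 0).
  apply is_lim_seq_ext with (fun _ => 0); [|apply is_lim_seq_const].
  intros n. induction n as [|n IH]; [rewrite sum_O | rewrite sum_Sn, <- IH]; cbn; ring.
Qed.

Lemma is_series_RtoC (b : nat -> R) (l : R) :
  is_series (fun n => RtoC (b n)) (RtoC l) <-> is_series b l.
Proof. rewrite is_series_C_iff. simpl. split; [tauto | split; [assumption | apply is_series_R0]]. Qed.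

Lemma is_series_succ_0 {K : AbsRing} {V : NormedModule K} (a : nat -> V) (l : V) :
  a 0%nat = zero -> is_series (fun k => a (S k)) l -> is_series a l.
Proof.
  intros H0 H. apply is_series_decr_1.
  match goal with |- is_series _ ?x => replace x with l; [exact H|] end.
  rewrite H0. symmetry. exact (minus_zero_r l).
Qed.

Lemma sum_n_nonneg (b : nat -> R) N : (forall k, 0 <= b k) -> 0 <= sum_n b N.
Proof. intros Hb. rewrite sum_n_Reals. apply cond_pos_sum. exact Hb. Qed.

Lemma sum_n_le_compat (b c : nat -> R) N : (forall k, b k <= c k) -> sum_n b N <= sum_n c N.
Proof. intros H. rewrite !sum_n_Reals. apply sum_Rle. auto. Qed.

Lemma term_le_sum_n (b : nat -> R) N : (forall k, 0 <= b k) -> b N <= sum_n b N.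
Proof.
  intros Hb. destruct N as [|N]; [rewrite sum_O; lra|].
  rewrite sum_Sn. pose proof (sum_n_nonneg b N Hb). change (b (S N) <= sum_n b N + b (S N)). lra.
Qed.

Lemma sum_n_le_is_series (b : nat -> R) l N :
  (forall k, 0 <= b k) -> is_series b l -> sum_n b N <= l.
Proof.
  intros Hb Hl. apply (is_lim_seq_incr_compare (sum_n b) l Hl).
  intros n. rewrite sum_Sn. change (sum_n b n <= sum_n b n + b (S n)). specialize (Hb (S n)). lra.
Qed.

Lemma is_series_le_bound (b : nat -> R) l M :
  is_series b l -> (forall N, sum_n b N <= M) -> l <= M.
Proof. intros Hb HM. exact (is_lim_seq_le (sum_n b) (fun _ => M) l M HM Hb (is_lim_seq_const M)). Qed.

Lemma is_series_le (b c : nat -> R) l m :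
  (forall k, b k <= c k) -> is_series b l -> is_series c m -> l <= m.
Proof. intros H Hb Hc. exact (is_lim_seq_le _ _ l m (fun N => sum_n_le_compat b c N H) Hb Hc). Qed.

Lemma ex_series_nonneg_bounded (b : nat -> R) M :
  (forall k, 0 <= b k) -> (forall N, sum_n b N <= M) -> ex_series b.
Proof.
  intros Hb HM. destruct (ex_finite_lim_seq_incr (sum_n b) M) as [l Hl]; [|exact HM|exists l; exact Hl].
  intros n. rewrite sum_Sn. change (sum_n b n <= sum_n b n + b (S n)). specialize (Hb (S n)). lra.
Qed.

Lemma Series_nonneg (b : nat -> R) : (forall k, 0 <= b k) -> ex_series b -> 0 <= Series b.
Proof.
  intros Hb He. apply Rle_trans with (sum_n b 0); [now apply sum_n_nonneg|].
  apply sum_n_le_is_series; [exact Hb | now apply Series_correct].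
Qed.

Lemma ex_series_nonneg_le (b c : nat -> R) :
  (forall n, 0 <= b n <= c n) -> ex_series c -> ex_series b.
Proof.
  intros H. apply (ex_series_le b c). intros n. change (Rabs (b n) <= c n).
  rewrite Rabs_pos_eq; apply H.
Qed.

Lemma Rabs_fst_le_Cmod (z : C) : Rabs (fst z) <= Cmod z.
Proof. eapply Rle_trans; [apply Rmax_l | apply Rmax_Cmod]. Qed.

Lemma Rabs_snd_le_Cmod (z : C) : Rabs (snd z) <= Cmod z.
Proof. eapply Rle_trans; [apply Rmax_r | apply Rmax_Cmod]. Qed.

Lemma ex_series_Rabs_le_Cmod (u : nat -> C) (g : C -> R) :
  (forall z, Rabs (g z) <= Cmod z) ->
  ex_series (fun n => Cmod (u n)) -> ex_series (fun n => Rabs (g (u n))).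
Proof. intros Hg. apply ex_series_nonneg_le. intros n. split; [apply Rabs_pos | apply Hg]. Qed.

Lemma is_series_sum_n (a : nat -> nat -> R) (s : nat -> R) N :
  (forall n, is_series (a n) (s n)) ->
  is_series (fun k => sum_n (fun n => a n k) N) (sum_n s N).
Proof.
  intros H. induction N as [|N IH].
  - rewrite sum_O. apply is_series_ext with (a 0%nat); [intros k; now rewrite sum_O | apply H].
  - rewrite sum_Sn. apply is_series_ext with (fun k => plus (sum_n (fun n => a n k) N) (a (S N) k)).
    + intros k. now rewrite sum_Sn.
    + now apply (is_series_plus _ _ _ _ IH).
Qed.

(** * Interchanging summations *)

Lemma series_fubini_nonneg (b : nat -> nat -> R) :
  (forall n k, 0 <= b n k) -> (forall n, ex_series (b n)) -> ex_series (fun n => Series (b n)) ->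
  (forall k, ex_series (fun n => b n k)) /\
  is_series (fun k => Series (fun n => b n k)) (Series (fun n => Series (b n))).
Proof.
  intros Hb Hrow Hsum.
  assert (Hcol : forall k, ex_series (fun n => b n k)).
  { intros k. apply (ex_series_nonneg_le _ (fun n => Series (b n))); [|exact Hsum].
    intros n. split; [apply Hb|].
    apply Rle_trans with (sum_n (b n) k); [now apply term_le_sum_n|].
    apply sum_n_le_is_series; [apply Hb | now apply Series_correct]. }
  split; [exact Hcol|].
  set (col := fun k => Series (fun n => b n k)).
  assert (Hcol_bound : forall K, sum_n col K <= Series (fun n => Series (b n))).
  { intros K. apply is_series_le with (fun n => sum_n (b n) K) (fun n => Series (b n)).
    - intros n. apply sum_n_le_is_series; [apply Hb | now apply Series_correct].
    - apply is_series_sum_n with (a := fun k n => b n k). intros k. now apply Series_correct.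
    - now apply Series_correct. }
  assert (Hcol_sum : ex_series col).
  { apply ex_series_nonneg_bounded with (2 := Hcol_bound). intros k. now apply Series_nonneg. }
  assert (Hrow_bound : forall N, sum_n (fun n => Series (b n)) N <= Series col).
  { intros N. apply is_series_le with (fun k => sum_n (fun n => b n k) N) col.
    - intros k. apply sum_n_le_is_series; [intros; apply Hb | now apply Series_correct].
    - apply is_series_sum_n. intros n. now apply Series_correct.
    - now apply Series_correct. }
  replace (Series (fun n => Series (b n))) with (Series col); [now apply Series_correct|].
  apply Rle_antisym.
  - apply is_series_le_bound with col; [now apply Series_correct | exact Hcol_bound].
  - apply is_series_le_bound with (fun n => Series (b n)); [now apply Series_correct | exact Hrow_bound].
Qed.

Lemma series_fubini (a : nat -> nat -> R) :
  (forall n, ex_series (fun k => Rabs (a n k))) ->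
  ex_series (fun n => Series (fun k => Rabs (a n k))) ->
  is_series (fun k => Series (fun n => a n k)) (Series (fun n => Series (a n))).
Proof.
  intros Hrow Hsum.
  assert (Hdominated : forall q : nat -> nat -> R, (forall n k, 0 <= q n k <= Rabs (a n k)) ->
    (forall n, ex_series (q n)) /\ ex_series (fun n => Series (q n)) /\
    (forall k, ex_series (fun n => q n k)) /\
    is_series (fun k => Series (fun n => q n k)) (Series (fun n => Series (q n)))).
  { intros q Hq.
    assert (Hqrow : forall n, ex_series (q n))
      by (intros n; exact (ex_series_nonneg_le _ _ (Hq n) (Hrow n))).
    assert (Hqsum : ex_series (fun n => Series (q n))).
    { apply (ex_series_nonneg_le _ (fun n => Series (fun k => Rabs (a n k)))); [|exact Hsum].
      intros n. split; [apply Series_nonneg; [apply Hq | apply Hqrow]|].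
      apply Series_le; [apply Hq | apply Hrow]. }
    destruct (series_fubini_nonneg q) as [Hqcol Hq_exch]; [apply Hq | exact Hqrow | exact Hqsum |].
    tauto. }
  set (p := fun n k => (Rabs (a n k) + a n k) / 2).
  set (m := fun n k => (Rabs (a n k) - a n k) / 2).
  assert (Ha : forall n k, a n k = p n k - m n k) by (intros; unfold p, m; field).
  destruct (Hdominated p) as (Hprow & Hpsum & Hpcol & Hp_exch);
    [intros n k; unfold p, Rabs; destruct (Rcase_abs (a n k)); lra|].
  destruct (Hdominated m) as (Hmrow & Hmsum & Hmcol & Hm_exch);
    [intros n k; unfold m, Rabs; destruct (Rcase_abs (a n k)); lra|].
  assert (Hseries_a : forall n, Series (a n) = Series (p n) - Series (m n)).
  { intros n. rewrite <- Series_minus by auto. apply Series_ext. apply Ha. }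
  rewrite (Series_ext _ _ Hseries_a), Series_minus by auto.
  apply is_series_ext with (fun k => Series (fun n => p n k) - Series (fun n => m n k)).
  - intros k. rewrite <- Series_minus by auto. apply Series_ext. intros n. now rewrite Ha.
  - exact (is_series_minus _ _ _ _ Hp_exch Hm_exch).
Qed.

Lemma CSeries_fubini (a : nat -> nat -> C) :
  (forall n, ex_series (fun k => Cmod (a n k))) ->
  ex_series (fun n => Series (fun k => Cmod (a n k))) ->
  is_series (fun k => CSeries (fun n => a n k)) (CSeries (fun n => CSeries (a n))).
Proof.
  intros Hrow Hsum.
  assert (Hpart : forall g : C -> R, (forall z, Rabs (g z) <= Cmod z) ->
    is_series (fun k => Series (fun n => g (a n k))) (Series (fun n => Series (fun k => g (a n k))))).
  { intros g Hg.
    assert (Hgrow : forall n, ex_series (fun k => Rabs (g (a n k))))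
      by (intros n; exact (ex_series_Rabs_le_Cmod (a n) g Hg (Hrow n))).
    apply series_fubini; [exact Hgrow|].
    apply (ex_series_nonneg_le _ (fun n => Series (fun k => Cmod (a n k)))); [|exact Hsum].
    intros n. split; [apply Series_nonneg; [intros; apply Rabs_pos | apply Hgrow]|].
    apply Series_le; [intros k; split; [apply Rabs_pos | apply Hg] | apply Hrow]. }
  apply is_series_C_iff. split; apply Hpart; [apply Rabs_fst_le_Cmod | apply Rabs_snd_le_Cmod].
Qed.

Definition exp_term (w : C) (n : nat) : C := Cdiv (Cpow w n) (RtoC (INR (fact n))).

Lemma RtoC_neq_0 (x : R) : x <> 0 -> RtoC x <> 0%C.
Proof. intros H E. apply H. now injection E. Qed.

Lemma RtoC_INR_fact_neq_0 n : RtoC (INR (fact n)) <> 0%C.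
Proof. apply RtoC_neq_0, INR_fact_neq_0. Qed.

Lemma exp_term_RtoC (x : R) n : exp_term (RtoC x) n = RtoC (x ^ n / INR (fact n)).
Proof. unfold exp_term. rewrite RtoC_div, RtoC_pow by apply INR_fact_neq_0. reflexivity. Qed.

Lemma Cmod_exp_term w n : Cmod (exp_term w n) = Cmod w ^ n / INR (fact n).
Proof.
  unfold exp_term. rewrite Cmod_div by apply RtoC_INR_fact_neq_0.
  rewrite Cmod_pow, Cmod_R, Rabs_pos_eq by apply pos_INR. reflexivity.
Qed.

Lemma exp_term_0 w : exp_term w 0 = 1%C.
Proof. unfold exp_term. simpl. field. Qed.

Lemma exp_term_succ w n : (RtoC (INR (S n)) * exp_term w (S n))%C = (w * exp_term w n)%C.
Proof.
  unfold exp_term. change (fact (S n)) with (S n * fact n)%nat.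
  rewrite mult_INR, RtoC_mult, Cpow_S. field.
  split; [apply RtoC_INR_fact_neq_0 | apply RtoC_neq_0, not_0_INR; lia].
Qed.

Lemma exp_term_mult_l (c w : C) n : exp_term (c * w)%C n = (Cpow c n * exp_term w n)%C.
Proof. unfold exp_term. rewrite Cpow_mult_l. field. apply RtoC_INR_fact_neq_0. Qed.

Lemma is_series_exp (x : R) : is_series (fun n => x ^ n / INR (fact n)) (exp x).
Proof.
  generalize (is_exp_Reals x). unfold is_pseries. apply is_series_ext.
  intros n. rewrite pow_n_pow. reflexivity.
Qed.

Lemma ex_series_Cmod_exp_term w : ex_series (fun n => Cmod (exp_term w n)).
Proof.
  apply ex_series_ext with (fun n => Cmod w ^ n / INR (fact n)).
  - intros n. symmetry. apply Cmod_exp_term.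
  - eexists. apply is_series_exp.
Qed.

Lemma is_series_Cexp w : is_series (exp_term w) (Cexp w).
Proof. apply is_series_C_abs, ex_series_Cmod_exp_term. Qed.

Lemma Cexp_RtoC (x : R) : Cexp (RtoC x) = RtoC (exp x).
Proof.
  apply CSeries_unique. apply is_series_ext with (fun n => RtoC (x ^ n / INR (fact n))).
  - intros n. symmetry. apply exp_term_RtoC.
  - apply is_series_RtoC, is_series_exp.
Qed.

Lemma sum_n_succ_l {G : AbelianMonoid} (a : nat -> G) n :
  sum_n a (S n) = plus (a 0%nat) (sum_n (fun i => a (S i)) n).
Proof. unfold sum_n. rewrite sum_Sn_m, sum_n_m_S by lia. reflexivity. Qed.

Lemma sum_n_Cmult_l (c : C) (u : nat -> C) n :
  sum_n (fun k => (c * u k)%C) n = (c * sum_n u n)%C.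
Proof. exact (sum_n_mult_l c u n). Qed.

Lemma sum_n_Cplus (u v : nat -> C) n :
  sum_n (fun k => (u k + v k)%C) n = (sum_n u n + sum_n v n)%C.
Proof. exact (sum_n_plus u v n). Qed.

Lemma sum_n_C_ext_loc (u v : nat -> C) n :
  (forall k, (k <= n)%nat -> u k = v k) -> sum_n u n = sum_n v n.
Proof. exact (sum_n_ext_loc u v n). Qed.

Lemma exp_term_plus (a b : C) n :
  sum_n (fun i => exp_term a i * exp_term b (n - i))%C n = exp_term (a + b)%C n :> C.
Proof.
  induction n as [|n IH].
  - rewrite sum_O, !exp_term_0. simpl. ring.
  - (* Both sides satisfy [(n + 1) s_(n+1) = (a + b) s_n]; split [n + 1 = i + (n + 1 - i)]. *)
    set (T := fun i => (exp_term a i * exp_term b (S n - i))%C).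
    assert (Hrec : (RtoC (INR (S n)) * sum_n T (S n))%C =
      (sum_n (fun i => RtoC (INR i) * T i) (S n) + sum_n (fun i => RtoC (INR (S n - i)) * T i) (S n))%C).
    { rewrite <- sum_n_Cmult_l, <- sum_n_Cplus. apply sum_n_C_ext_loc. intros i Hi.
      rewrite <- Cmult_plus_distr_r, <- RtoC_plus, <- plus_INR. do 3 f_equal. lia. }
    assert (Hleft : sum_n (fun i => RtoC (INR i) * T i)%C (S n) =
      (a * sum_n (fun i => exp_term a i * exp_term b (n - i)) n)%C).
    { rewrite sum_n_succ_l, <- sum_n_Cmult_l. change (plus ?x ?y) with (Cplus x y).
      unfold T at 1. simpl INR at 1. rewrite Cmult_0_l, Cplus_0_l.
      apply sum_n_C_ext_loc. intros i _. unfold T. replace (S n - S i)%nat with (n - i)%nat by lia.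
      rewrite Cmult_assoc, exp_term_succ. ring. }
    assert (Hright : sum_n (fun i => RtoC (INR (S n - i)) * T i)%C (S n) =
      (b * sum_n (fun i => exp_term a i * exp_term b (n - i)) n)%C).
    { rewrite sum_Sn, <- sum_n_Cmult_l. change (plus ?x ?y) with (Cplus x y).
      rewrite Nat.sub_diag. simpl INR at 2. rewrite Cmult_0_l, Cplus_0_r.
      apply sum_n_C_ext_loc. intros i Hi. unfold T. replace (S n - i)%nat with (S (n - i)) by lia.
      transitivity (exp_term a i * (RtoC (INR (S (n - i))) * exp_term b (S (n - i))))%C; [ring|].
      rewrite exp_term_succ. ring. }
    assert (Hn : RtoC (INR (S n)) <> 0%C) by (apply RtoC_neq_0, not_0_INR; lia).
    rewrite Hleft, Hright, IH, <- Cmult_plus_distr_r, <- exp_term_succ in Hrec.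
    apply (f_equal (Cmult (/ RtoC (INR (S n))))) in Hrec.
    rewrite !Cmult_assoc, Cinv_l, !Cmult_1_l in Hrec by exact Hn. exact Hrec.
Qed.

Lemma is_series_C_cauchy_product (u v : nat -> C) (lu lv : C) :
  is_series u lu -> is_series v lv ->
  ex_series (fun n => Cmod (u n)) -> ex_series (fun n => Cmod (v n)) ->
  is_series (fun n => sum_n (fun k => u k * v (n - k)%nat)%C n) (lu * lv)%C.
Proof.
  intros [Hu1 Hu2]%is_series_C_iff [Hv1 Hv2]%is_series_C_iff Hu Hv.
  pose proof (ex_series_Rabs_le_Cmod u fst Rabs_fst_le_Cmod Hu) as Hu1'.
  pose proof (ex_series_Rabs_le_Cmod u snd Rabs_snd_le_Cmod Hu) as Hu2'.
  pose proof (ex_series_Rabs_le_Cmod v fst Rabs_fst_le_Cmod Hv) as Hv1'.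
  pose proof (ex_series_Rabs_le_Cmod v snd Rabs_snd_le_Cmod Hv) as Hv2'.
  apply is_series_C_iff. split.
  - apply is_series_ext with (fun n => sum_f_R0 (fun k => fst (u k) * fst (v (n - k)%nat)) n
                                     - sum_f_R0 (fun k => snd (u k) * snd (v (n - k)%nat)) n).
    + intros n. rewrite sum_n_fst, sum_n_Reals, <- minus_sum. apply sum_eq. intros; simpl; ring.
    + exact (is_series_minus _ _ _ _ (is_series_mult _ _ _ _ Hu1 Hv1 Hu1' Hv1')
                                     (is_series_mult _ _ _ _ Hu2 Hv2 Hu2' Hv2')).
  - apply is_series_ext with (fun n => sum_f_R0 (fun k => fst (u k) * snd (v (n - k)%nat)) n
                                     + sum_f_R0 (fun k => snd (u k) * fst (v (n - k)%nat)) n).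
    + intros n. rewrite sum_n_snd, sum_n_Reals, <- plus_sum. apply sum_eq. intros; simpl; ring.
    + exact (is_series_plus _ _ _ _ (is_series_mult _ _ _ _ Hu1 Hv2 Hu1' Hv2')
                                    (is_series_mult _ _ _ _ Hu2 Hv1 Hu2' Hv1')).
Qed.

Lemma Cexp_plus (a b : C) : Cexp (a + b)%C = (Cexp a * Cexp b)%C.
Proof.
  apply CSeries_unique. apply is_series_ext with (fun n => sum_n (fun k => exp_term a k * exp_term b (n - k))%C n).
  - intros n. apply exp_term_plus.
  - apply is_series_C_cauchy_product; auto using is_series_Cexp, ex_series_Cmod_exp_term.
Qed.

(** * Charlier polynomials *)

(* [charlier (- lam) n] is the monic Charlier polynomial of degree [n] in [k] for the Poisson
   law of parameter [lam]. *)
Fixpoint charlier (mu : R) (n k : nat) : R :=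
  match n with
  | 0%nat => 1
  | S m => INR k * charlier mu m (pred k) + mu * charlier mu m k
  end.

Lemma charlier_succ_diff mu n k :
  charlier mu (S n) (S k) - charlier mu (S n) k = INR (S n) * charlier mu n k.
Proof.
  revert k. induction n as [|n IH]; intros k.
  - change (INR (S k) * 1 + mu * 1 - (INR k * 1 + mu * 1) = INR 1 * 1).
    rewrite S_INR. simpl. ring.
  - change (charlier mu (S (S n)) (S k)) with
      (INR (S k) * charlier mu (S n) k + mu * charlier mu (S n) (S k)).
    change (charlier mu (S (S n)) k) with
      (INR k * charlier mu (S n) (pred k) + mu * charlier mu (S n) k).
    assert (Hpred : INR k * (charlier mu (S n) k - charlier mu (S n) (pred k))
                    = INR (S n) * (INR k * charlier mu n (pred k))).
    { destruct k as [|k]; [simpl; ring|]. simpl pred. rewrite IH. ring. }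
    assert (HSk : charlier mu (S n) (S k) = charlier mu (S n) k + INR (S n) * charlier mu n k)
      by (rewrite <- IH; ring).
    rewrite HSk.
    replace (INR k * charlier mu (S n) (pred k))
      with (INR k * charlier mu (S n) k - INR (S n) * (INR k * charlier mu n (pred k))) by lra.
    change (charlier mu (S n) k) with (INR k * charlier mu n (pred k) + mu * charlier mu n k).
    rewrite !S_INR. ring.
Qed.

Lemma charlier_0_r mu n : charlier mu n 0 = mu ^ n.
Proof. induction n as [|n IH]; simpl; [reflexivity | rewrite IH; ring]. Qed.

Lemma Rabs_charlier_le mu n k : Rabs (charlier mu n k) <= charlier (Rabs mu) n k.
Proof.
  revert k. induction n as [|n IH]; intros k; simpl; [rewrite Rabs_R1; lra|].
  eapply Rle_trans; [apply Rabs_triang|].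
  rewrite !Rabs_mult, (Rabs_pos_eq (INR k)) by apply pos_INR.
  apply Rplus_le_compat; apply Rmult_le_compat_l; auto using pos_INR, Rabs_pos.
Qed.

Lemma is_series_charlier_gen mu (u : C) k :
  is_series (fun n => RtoC (charlier mu n k) * exp_term u n)%C
            (Cpow (1 + u) k * Cexp (RtoC mu * u))%C.
Proof.
  induction k as [|k IH].
  - simpl Cpow. rewrite Cmult_1_l.
    apply is_series_ext with (exp_term (RtoC mu * u)); [|apply is_series_Cexp].
    intros n. rewrite exp_term_mult_l, charlier_0_r, RtoC_pow. reflexivity.
  - set (G := (Cpow (1 + u) k * Cexp (RtoC mu * u))%C) in *.
    set (shifted := fun n => match n with
                             | 0%nat => RtoC 0
                             | S m => (u * (RtoC (charlier mu m k) * exp_term u m))%C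
                             end).
    assert (Hshifted : is_series shifted (u * G)%C).
    { apply is_series_succ_0; [reflexivity|]. exact (is_series_scal_l u _ _ IH). }
    replace (Cpow (1 + u) (S k) * Cexp (RtoC mu * u))%C with (G + u * G)%C
      by (unfold G; rewrite Cpow_S; ring).
    apply is_series_C_ext with (fun n => RtoC (charlier mu n k) * exp_term u n + shifted n)%C;
      [|exact (is_series_plus _ _ _ _ IH Hshifted)].
    intros [|n]; unfold shifted; [simpl; ring|].
    replace (u * (RtoC (charlier mu n k) * exp_term u n))%C
      with (RtoC (charlier mu n k) * (RtoC (INR (S n)) * exp_term u (S n)))%C
      by (rewrite exp_term_succ; ring).
    replace (charlier mu (S n) (S k)) with (charlier mu (S n) k + INR (S n) * charlier mu n k)
      by (rewrite <- charlier_succ_diff; ring).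
    rewrite RtoC_plus, RtoC_mult. ring.
Qed.

Lemma is_series_charlier_gen_R mu (t : R) k :
  is_series (fun n => charlier mu n k * (t ^ n / INR (fact n))) ((1 + t) ^ k * exp (mu * t)).
Proof.
  apply is_series_RtoC.
  apply is_series_ext with (fun n => RtoC (charlier mu n k) * exp_term (RtoC t) n)%C.
  - intros n. rewrite exp_term_RtoC, RtoC_mult. reflexivity.
  - rewrite RtoC_mult, RtoC_pow, <- Cexp_RtoC, RtoC_plus, RtoC_mult. apply is_series_charlier_gen.
Qed.

Definition poisson (lam : R) (k : nat) : R := exp (- lam) * (lam ^ k / INR (fact k)).

Lemma poisson_pos lam k : 0 < lam -> 0 < poisson lam k.
Proof.
  intros Hlam. apply Rmult_lt_0_compat; [apply exp_pos|].
  apply Rdiv_lt_0_compat; [now apply pow_lt | apply lt_0_INR, lt_O_fact].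
Qed.

Lemma poisson_succ lam k : poisson lam (S k) * INR (S k) = lam * poisson lam k.
Proof.
  unfold poisson. change (fact (S k)) with (S k * fact k)%nat. rewrite mult_INR. simpl pow.
  field. split; [apply INR_fact_neq_0 | apply not_0_INR; lia].
Qed.

Lemma is_series_poisson lam : is_series (poisson lam) 1.
Proof.
  replace 1 with (exp (- lam) * exp lam)
    by (rewrite <- exp_plus, Rplus_opp_l; apply exp_0).
  exact (is_series_scal_l _ _ _ (is_series_exp lam)).
Qed.

Lemma pi_mass_RtoC alpha s k :
  alpha <> 0 -> pi_mass alpha (RtoC s) k = RtoC (poisson (s / alpha ^ 2) k).
Proof.
  intros Halpha. unfold pi_mass, poisson.
  rewrite <- RtoC_div by (apply pow_nonzero; exact Halpha).
  rewrite <- RtoC_opp, Cexp_RtoC. fold (exp_term (RtoC (s / alpha ^ 2)) k).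
  rewrite exp_term_RtoC, RtoC_mult. reflexivity.
Qed.

Definition exp_bounded (g : nat -> R) : Prop :=
  exists M B, 0 <= M /\ 1 <= B /\ forall k, Rabs (g k) <= M * B ^ k.

Lemma exp_bounded_ext g h : (forall k, g k = h k) -> exp_bounded g -> exp_bounded h.
Proof. intros E (M & B & HM & HB & Hg). exists M, B. repeat split; auto. intros k. rewrite <- E. auto. Qed.

Lemma exp_bounded_const c : exp_bounded (fun _ => c).
Proof. exists (Rabs c), 1. repeat split; [apply Rabs_pos | lra |]. intros k. rewrite pow1. lra. Qed.

Lemma exp_bounded_INR : exp_bounded INR.
Proof.
  exists 1, 2. repeat split; [lra | lra |]. intros k. rewrite Rabs_pos_eq, Rmult_1_l by apply pos_INR.
  induction k as [|k IH]; [simpl; lra|].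
  rewrite S_INR. simpl. pose proof (pow_R1_Rle 2 k). lra.
Qed.

Lemma exp_bounded_mult g h : exp_bounded g -> exp_bounded h -> exp_bounded (fun k => g k * h k).
Proof.
  intros (M1 & B1 & HM1 & HB1 & H1) (M2 & B2 & HM2 & HB2 & H2).
  exists (M1 * M2), (B1 * B2). repeat split; [nra | nra |].
  intros k. rewrite Rabs_mult, Rpow_mult_distr.
  replace (M1 * M2 * (B1 ^ k * B2 ^ k)) with ((M1 * B1 ^ k) * (M2 * B2 ^ k)) by ring.
  apply Rmult_le_compat; auto using Rabs_pos.
Qed.

Lemma exp_bounded_plus g h : exp_bounded g -> exp_bounded h -> exp_bounded (fun k => g k + h k).
Proof.
  intros (M1 & B1 & HM1 & HB1 & H1) (M2 & B2 & HM2 & HB2 & H2).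
  exists (M1 + M2), (B1 * B2). repeat split; [lra | nra |].
  intros k. eapply Rle_trans; [apply Rabs_triang|].
  assert (B1 ^ k <= (B1 * B2) ^ k) by (apply pow_incr; nra).
  assert (B2 ^ k <= (B1 * B2) ^ k) by (apply pow_incr; nra).
  specialize (H1 k). specialize (H2 k). nra.
Qed.

Lemma exp_bounded_scal c g : exp_bounded g -> exp_bounded (fun k => c * g k).
Proof. apply (exp_bounded_mult (fun _ => c)), exp_bounded_const. Qed.

Lemma exp_bounded_lin a b g h :
  exp_bounded g -> exp_bounded h -> exp_bounded (fun k => a * g k + b * h k).
Proof. intros Hg Hh. apply (exp_bounded_plus (fun k => a * g k)); apply exp_bounded_scal; assumption. Qed.

Lemma exp_bounded_shift g : exp_bounded g -> exp_bounded (fun k => g (S k)).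
Proof.
  intros (M & B & HM & HB & H). exists (M * B), B. repeat split; [nra | exact HB |].
  intros k. specialize (H (S k)). simpl in H. lra.
Qed.

Lemma exp_bounded_pred g : exp_bounded g -> exp_bounded (fun k => g (pred k)).
Proof.
  intros (M & B & HM & HB & H). exists M, B. repeat split; [exact HM | exact HB |].
  intros k. eapply Rle_trans; [apply H|]. apply Rmult_le_compat_l; [exact HM|]. apply Rle_pow; [exact HB | lia].
Qed.

Lemma exp_bounded_pow g j : exp_bounded g -> exp_bounded (fun k => g k ^ j).
Proof.
  intros Hg. induction j as [|j IH]; [exact (exp_bounded_const 1)|].
  exact (exp_bounded_mult g (fun k => g k ^ j) Hg IH).
Qed.

Lemma exp_bounded_charlier mu n : exp_bounded (charlier mu n).
Proof.
  induction n as [|n IH]; [apply exp_bounded_const|].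
  apply (exp_bounded_plus (fun k => INR k * charlier mu n (pred k))).
  - apply (exp_bounded_mult INR); [apply exp_bounded_INR | exact (exp_bounded_pred _ IH)].
  - exact (exp_bounded_scal mu _ IH).
Qed.

Lemma ex_series_poisson_exp_bounded lam g :
  0 <= lam -> exp_bounded g -> ex_series (fun k => poisson lam k * g k).
Proof.
  intros Hlam (M & B & HM & HB & Hg). apply ex_series_Rabs.
  apply (ex_series_nonneg_le _ (fun k => exp (- lam) * M * ((lam * B) ^ k / INR (fact k)))).
  - intros k. split; [apply Rabs_pos|].
    rewrite Rabs_mult. unfold poisson.
    assert (Hq : 0 <= lam ^ k / INR (fact k))
      by (apply Rdiv_le_0_compat; [now apply pow_le | apply lt_0_INR, lt_O_fact]).
    rewrite Rabs_pos_eq by (apply Rmult_le_pos; [left; apply exp_pos | exact Hq]).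
    replace (exp (- lam) * M * ((lam * B) ^ k / INR (fact k)))
      with (exp (- lam) * (lam ^ k / INR (fact k)) * (M * B ^ k))
      by (rewrite Rpow_mult_distr; field; apply INR_fact_neq_0).
    apply Rmult_le_compat_l; [apply Rmult_le_pos; [left; apply exp_pos | exact Hq] | apply Hg].
  - eexists. exact (is_series_scal_l _ _ _ (is_series_exp (lam * B))).
Qed.

(** * Finite differences and orthogonality *)

Definition fdiff (g : nat -> R) (k : nat) : R := g (S k) - g k.

Lemma fdiff_iter_ext n g h :
  (forall k, g k = h k) -> forall k, Nat.iter n fdiff g k = Nat.iter n fdiff h k.
Proof.
  intros E. induction n as [|n IH]; intros k; [apply E|].
  simpl. unfold fdiff. rewrite !IH. reflexivity.
Qed.

Lemma fdiff_iter_lin n a b g h k :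
  Nat.iter n fdiff (fun k => a * g k + b * h k) k
  = a * Nat.iter n fdiff g k + b * Nat.iter n fdiff h k.
Proof.
  revert k. induction n as [|n IH]; intros k; [reflexivity|].
  simpl. unfold fdiff at 1 3 5. rewrite !IH. ring.
Qed.

Lemma fdiff_iter_shift n g k :
  Nat.iter n fdiff (fun k => g (S k)) k = Nat.iter n fdiff g (S k).
Proof.
  revert k. induction n as [|n IH]; intros k; [reflexivity|].
  simpl. unfold fdiff at 1 3. rewrite !IH. reflexivity.
Qed.

Lemma fdiff_iter_const n c k : Nat.iter (S n) fdiff (fun _ => c) k = 0.
Proof.
  revert k. induction n as [|n IH]; intros k; [unfold fdiff; simpl; ring|].
  change (Nat.iter (S n) fdiff (fun _ => c) (S k) - Nat.iter (S n) fdiff (fun _ => c) k = 0).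
  rewrite !IH. ring.
Qed.

Lemma fdiff_const g : (forall k, fdiff g k = 0) -> forall k, g k = g 0%nat.
Proof.
  intros H k. induction k as [|k IH]; [reflexivity|].
  specialize (H k). unfold fdiff in H. lra.
Qed.

Lemma fdiff_iter_vanish_le d e g :
  (forall k, Nat.iter d fdiff g k = 0) -> (d <= e)%nat -> forall k, Nat.iter e fdiff g k = 0.
Proof.
  intros H Hde. induction Hde as [|e Hde IH]; [exact H|].
  intros k. change (Nat.iter e fdiff g (S k) - Nat.iter e fdiff g k = 0). rewrite !IH. ring.
Qed.

Lemma fdiff_iter_INR_mult d g L :
  (forall k, Nat.iter d fdiff g k = L) ->
  forall k, Nat.iter (S d) fdiff (fun k => INR k * g k) k = INR (S d) * L.
Proof.
  revert g L. induction d as [|d IH]; intros g L H k.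
  - simpl in H. simpl. unfold fdiff. rewrite !H, S_INR. simpl. ring.
  - rewrite Nat.iter_succ_r.
    rewrite (fdiff_iter_ext _ _ (fun k => 1 * (INR k * fdiff g k) + 1 * g (S k)))
      by (intros j; unfold fdiff; rewrite S_INR; ring).
    rewrite fdiff_iter_lin, (IH (fdiff g) L), fdiff_iter_shift.
    + rewrite H, (S_INR (S d)). ring.
    + intros j. rewrite <- Nat.iter_succ_r. apply H.
Qed.

Lemma fdiff_iter_pow_INR j k : Nat.iter j fdiff (fun k => INR k ^ j) k = INR (fact j).
Proof.
  revert k. induction j as [|j IH]; intros k; [reflexivity|].
  rewrite (fdiff_iter_ext _ _ (fun k => INR k * INR k ^ j)) by reflexivity.
  rewrite (fdiff_iter_INR_mult j _ (INR (fact j)) IH).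
  change (fact (S j)) with (S j * fact j)%nat. rewrite mult_INR. reflexivity.
Qed.

Lemma fdiff_iter_charlier mu n k : Nat.iter n fdiff (charlier mu n) k = INR (fact n).
Proof.
  revert k. induction n as [|n IH]; intros k; [reflexivity|].
  rewrite Nat.iter_succ_r.
  rewrite (fdiff_iter_ext _ _ (fun k => INR (S n) * charlier mu n k + 0 * charlier mu n k))
    by (intros j; unfold fdiff; rewrite charlier_succ_diff; ring).
  rewrite fdiff_iter_lin, IH. change (fact (S n)) with (S n * fact n)%nat. rewrite mult_INR. ring.
Qed.

Lemma exp_bounded_fdiff g : exp_bounded g -> exp_bounded (fdiff g).
Proof.
  intros Hg. apply (exp_bounded_ext (fun k => 1 * g (S k) + -1 * g k)); [intros; unfold fdiff; ring|].
  exact (exp_bounded_lin _ _ _ _ (exp_bounded_shift _ Hg) Hg).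
Qed.

(* Summation by parts, based on [k * poisson lam k = lam * poisson lam (k - 1)]. *)
Lemma is_series_poisson_charlier_succ lam n g :
  0 <= lam -> exp_bounded g ->
  is_series (fun k => poisson lam k * charlier (- lam) (S n) k * g k)
            (lam * Series (fun k => poisson lam k * charlier (- lam) n k * fdiff g k)).
Proof.
  intros Hlam Hg.
  set (b := fun k => poisson lam k * charlier (- lam) n k * g k).
  set (b1 := fun k => poisson lam k * charlier (- lam) n k * g (S k)).
  assert (Hb : ex_series b).
  { apply ex_series_R_ext with (fun k => poisson lam k * (charlier (- lam) n k * g k));
      [intros; unfold b; ring|].
    apply ex_series_poisson_exp_bounded; [exact Hlam|].
    exact (exp_bounded_mult _ _ (exp_bounded_charlier _ n) Hg). }
  assert (Hb1 : ex_series b1).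
  { apply ex_series_R_ext with (fun k => poisson lam k * (charlier (- lam) n k * g (S k)));
      [intros; unfold b1; ring|].
    apply ex_series_poisson_exp_bounded; [exact Hlam|].
    exact (exp_bounded_mult _ _ (exp_bounded_charlier _ n) (exp_bounded_shift _ Hg)). }
  assert (Hraise : is_series (fun k => poisson lam k * INR k * charlier (- lam) n (pred k) * g k)
                             (lam * Series b1)).
  { apply is_series_succ_0; [simpl; rewrite Rmult_0_r, !Rmult_0_l; reflexivity|].
    apply is_series_R_ext with (fun k => lam * b1 k).
    - intros k. unfold b1. simpl pred. rewrite <- !Rmult_assoc, <- poisson_succ. ring.
    - exact (is_series_scal_l _ _ _ (Series_correct _ Hb1)). }
  replace (Series (fun k => poisson lam k * charlier (- lam) n k * fdiff g k))
    with (Series b1 - Series b)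
    by (rewrite <- Series_minus by assumption; apply Series_ext; intros k; unfold b1, b, fdiff; ring).
  apply is_series_R_ext with (fun k => poisson lam k * INR k * charlier (- lam) n (pred k) * g k - lam * b k).
  - intros k. unfold b. simpl charlier. ring.
  - rewrite Rmult_minus_distr_l.
    exact (is_series_minus _ _ _ _ Hraise (is_series_scal_l _ _ _ (Series_correct _ Hb))).
Qed.

Lemma is_series_poisson_charlier lam n g :
  0 <= lam -> exp_bounded g ->
  is_series (fun k => poisson lam k * charlier (- lam) n k * g k)
            (lam ^ n * Series (fun k => poisson lam k * Nat.iter n fdiff g k)).
Proof.
  intros Hlam. revert g. induction n as [|n IH]; intros g Hg.
  - simpl. rewrite Rmult_1_l. apply is_series_R_ext with (fun k => poisson lam k * g k); [intros; ring|].
    now apply Series_correct, ex_series_poisson_exp_bounded.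
  - pose proof (is_series_poisson_charlier_succ lam n g Hlam Hg) as Hstep.
    rewrite (is_series_unique _ _ (IH (fdiff g) (exp_bounded_fdiff g Hg))) in Hstep.
    rewrite (Series_ext _ (fun k => poisson lam k * Nat.iter n fdiff (fdiff g) k))
      by (intros; rewrite Nat.iter_succ_r; reflexivity).
    simpl pow. rewrite Rmult_assoc. exact Hstep.
Qed.

Lemma is_series_poisson_charlier_fdiff_kernel lam n g :
  0 <= lam -> exp_bounded g -> (forall k, Nat.iter n fdiff g k = 0) ->
  is_series (fun k => poisson lam k * charlier (- lam) n k * g k) 0.
Proof.
  intros Hlam Hg Hker.
  replace 0 with (lam ^ n * Series (fun k => poisson lam k * Nat.iter n fdiff g k));
    [now apply is_series_poisson_charlier|].
  rewrite (Series_ext _ (fun _ => 0)) by (intros k; rewrite Hker; ring).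
  rewrite (is_series_unique _ _ is_series_R0). ring.
Qed.

Lemma is_series_poisson_charlier_sq lam n :
  0 <= lam ->
  is_series (fun k => poisson lam k * charlier (- lam) n k * charlier (- lam) n k)
            (lam ^ n * INR (fact n)).
Proof.
  intros Hlam.
  replace (INR (fact n)) with (Series (fun k => poisson lam k * Nat.iter n fdiff (charlier (- lam) n) k)).
  - apply is_series_poisson_charlier; [exact Hlam | apply exp_bounded_charlier].
  - rewrite (Series_ext _ (fun k => INR (fact n) * poisson lam k)) by (intros; rewrite fdiff_iter_charlier; ring).
    rewrite Series_scal_l, (is_series_unique _ _ (is_series_poisson lam)). ring.
Qed.

(** * Monic orthogonal polynomials for Poisson weights *)

Lemma is_series_nonneg_0 (b : nat -> R) :
  (forall k, 0 <= b k) -> is_series b 0 -> forall k, b k = 0.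
Proof.
  intros Hb Hs k. apply Rle_antisym; [|apply Hb].
  eapply Rle_trans; [apply (term_le_sum_n b k Hb) | apply (sum_n_le_is_series b 0 k Hb Hs)].
Qed.

(* A sequence killed by [Nat.iter N fdiff] plays the role of a polynomial of degree [< N]; subtracting a
   multiple of [charlier mu (N - 1)] lowers that degree. *)
Lemma is_series_fdiff_kernel_orthogonal (w c : nat -> R) mu N :
  (forall m, (m < N)%nat -> is_series (fun k => w k * c k * charlier mu m k) 0) ->
  forall g, (forall k, Nat.iter N fdiff g k = 0) -> is_series (fun k => w k * c k * g k) 0.
Proof.
  induction N as [|N IH]; intros Horth g Hker.
  - apply is_series_R_ext with (fun _ => 0); [|apply is_series_R0].
    intros k. simpl in Hker. rewrite Hker. ring.
  - set (L := Nat.iter N fdiff g 0%nat).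
    assert (HL : forall k, Nat.iter N fdiff g k = L) by (apply fdiff_const; exact Hker).
    set (h := fun k => 1 * g k + (- (L / INR (fact N))) * charlier mu N k).
    assert (Hh : is_series (fun k => w k * c k * h k) 0).
    { apply IH; [intros m Hm; apply Horth; lia|].
      intros k. unfold h. rewrite fdiff_iter_lin, HL, fdiff_iter_charlier.
      field. apply INR_fact_neq_0. }
    apply is_series_R_ext
      with (fun k => w k * c k * h k + L / INR (fact N) * (w k * c k * charlier mu N k));
      [intros k; unfold h; ring|].
    replace 0 with (0 + L / INR (fact N) * 0) by ring.
    exact (is_series_plus _ _ _ _ Hh (is_series_scal_l _ _ _ (Horth N (Nat.lt_succ_diag_r N)))).
Qed.

Lemma orthogonal_fdiff_normalized_eq_charlier (alpha lam : R) (c : nat -> nat -> R) :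
  alpha <> 0 -> 0 < lam ->
  (forall n k, Nat.iter n fdiff (c n) k = alpha ^ n * INR (fact n)) ->
  (forall n, exp_bounded (c n)) ->
  (forall n m, n <> m -> is_series (fun k => poisson lam k * (c n k * c m k)) 0) ->
  forall n k, c n k = alpha ^ n * charlier (- lam) n k.
Proof.
  intros Halpha Hlam Hlead Hbnd Horth n. induction n as [n IH] using lt_wf_ind.
  set (d := fun k => 1 * c n k + (- alpha ^ n) * charlier (- lam) n k).
  assert (Hker : forall k, Nat.iter n fdiff d k = 0)
    by (intros k; unfold d; rewrite fdiff_iter_lin, Hlead, fdiff_iter_charlier; ring).
  assert (Hcd : is_series (fun k => poisson lam k * c n k * d k) 0).
  { apply (is_series_fdiff_kernel_orthogonal _ _ (- lam) n); [|exact Hker].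
    intros m Hm.
    apply is_series_R_ext with (fun k => / alpha ^ m * (poisson lam k * (c n k * c m k))).
    - intros k. rewrite (IH m Hm k). field. apply pow_nonzero, Halpha.
    - replace 0 with (/ alpha ^ m * 0) by ring. apply (is_series_scal_l (V := R_NormedModule)), Horth. lia. }
  assert (Hchd : is_series (fun k => poisson lam k * charlier (- lam) n k * d k) 0).
  { apply is_series_poisson_charlier_fdiff_kernel; [lra | | exact Hker].
    exact (exp_bounded_lin 1 (- alpha ^ n) _ _ (Hbnd n) (exp_bounded_charlier _ n)). }
  assert (Hdd : is_series (fun k => poisson lam k * d k * d k) 0).
  { apply is_series_R_ext with (fun k => poisson lam k * c n k * d k
                                         - alpha ^ n * (poisson lam k * charlier (- lam) n k * d k));
      [intros k; unfold d; ring|].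
    replace 0 with (0 - alpha ^ n * 0) by ring.
    exact (is_series_minus _ _ _ _ Hcd (is_series_scal_l _ _ _ Hchd)). }
  assert (Hnonneg : forall j, 0 <= poisson lam j * d j * d j).
  { intros j. rewrite Rmult_assoc. apply Rmult_le_pos; [left; apply poisson_pos, Hlam | apply Rle_0_sqr]. }
  intros k. pose proof (is_series_nonneg_0 _ Hnonneg Hdd k) as Hd. cbv beta in Hd.
  rewrite Rmult_assoc in Hd.
  apply Rmult_integral in Hd as [Hd | Hd]; [pose proof (poisson_pos lam k Hlam); lra|].
  assert (Hdk : d k = 0) by (apply Rmult_integral in Hd; tauto).
  unfold d in Hdk. lra.
Qed.

Lemma fdiff_iter_monomial alpha j k :
  Nat.iter j fdiff (fun k => (alpha * INR k) ^ j) k = alpha ^ j * INR (fact j).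
Proof.
  rewrite (fdiff_iter_ext _ _ (fun k => alpha ^ j * INR k ^ j + 0 * INR k ^ j))
    by (intros; rewrite Rpow_mult_distr; ring).
  rewrite fdiff_iter_lin, fdiff_iter_pow_INR. ring.
Qed.

Lemma fdiff_iter_lower_terms alpha (b : nat -> R) n l :
  (forall j, In j l -> (j < n)%nat) ->
  forall k, Nat.iter n fdiff
              (fun k => fold_right Rplus 0 (map (fun j => b j * (alpha * INR k) ^ j) l)) k = 0.
Proof.
  induction l as [|j l IH]; intros Hl k.
  - destruct n as [|n]; [reflexivity | apply (fdiff_iter_const n 0)].
  - simpl. rewrite (fdiff_iter_ext _ _ (fun k => b j * (alpha * INR k) ^ j
                    + 1 * fold_right Rplus 0 (map (fun j => b j * (alpha * INR k) ^ j) l)))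
      by (intros; ring).
    rewrite fdiff_iter_lin, IH by (intros; apply Hl; now right).
    rewrite (fdiff_iter_vanish_le (S j) n (fun k => (alpha * INR k) ^ j)); [ring| |apply Hl; now left].
    intros i. change (Nat.iter j fdiff (fun k => (alpha * INR k) ^ j) (S i)
                      - Nat.iter j fdiff (fun k => (alpha * INR k) ^ j) i = 0).
    rewrite !fdiff_iter_monomial. ring.
Qed.

Lemma fdiff_iter_monic_poly alpha a n k :
  Nat.iter n fdiff (fun k => monic_poly a n (alpha * INR k)) k = alpha ^ n * INR (fact n).
Proof.
  unfold monic_poly.
  rewrite (fdiff_iter_ext _ _ (fun k => 1 * (alpha * INR k) ^ n
             + 1 * fold_right Rplus 0 (map (fun j => a n j * (alpha * INR k) ^ j) (seq 0 n))))
    by (intros; ring).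
  rewrite fdiff_iter_lin, fdiff_iter_monomial, fdiff_iter_lower_terms; [ring|].
  intros j Hj. apply in_seq in Hj. lia.
Qed.

Lemma exp_bounded_monic_poly alpha a n : exp_bounded (fun k => monic_poly a n (alpha * INR k)).
Proof.
  assert (Hmono : forall j, exp_bounded (fun k => (alpha * INR k) ^ j))
    by (intros j; apply (exp_bounded_pow (fun k => alpha * INR k)), exp_bounded_scal, exp_bounded_INR).
  apply (exp_bounded_plus (fun k => (alpha * INR k) ^ n)); [apply Hmono|].
  induction (seq 0 n) as [|j l IH]; [exact (exp_bounded_const 0)|].
  exact (exp_bounded_plus (fun k => a n j * (alpha * INR k) ^ j) _
           (exp_bounded_scal _ _ (Hmono j)) IH).
Qed.

Lemma monic_poly_eq_charlier alpha sigma a :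
  0 < alpha -> 0 < sigma -> orthogonal_wrt alpha sigma (monic_poly a) ->
  forall n k, monic_poly a n (alpha * INR k) = alpha ^ n * charlier (- (sigma / alpha ^ 2)) n k.
Proof.
  intros Halpha Hsigma Horth.
  apply (orthogonal_fdiff_normalized_eq_charlier alpha (sigma / alpha ^ 2)
           (fun n k => monic_poly a n (alpha * INR k))).
  - lra.
  - apply Rdiv_lt_0_compat; [exact Hsigma | now apply pow_lt].
  - apply fdiff_iter_monic_poly.
  - apply exp_bounded_monic_poly.
  - intros n m Hnm. apply is_series_RtoC.
    apply is_series_C_ext with (2 := Horth n m Hnm).
    intros k. rewrite pi_mass_RtoC by lra. rewrite <- RtoC_mult. f_equal. ring.
Qed.

Lemma ex_series_L2_exp (f : nat -> C) lam r :
  0 < lam -> 0 <= r ->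
  ex_series (fun k => Cmod (f k) ^ 2 * poisson lam k) ->
  ex_series (fun k => Cmod (f k) * (r ^ k / INR (fact k))).
Proof.
  intros Hlam Hr Hf.
  apply (ex_series_nonneg_le _ (fun k => exp lam / 2 * (Cmod (f k) ^ 2 * poisson lam k)
                                        + / 2 * ((r ^ 2 / lam) ^ k / INR (fact k)))).
  - intros k.
    (* AM-GM: [x q y <= q (x^2 + y^2) / 2] with [q = lam^k / k!] and [y = (r / lam)^k]. *)
    set (x := Cmod (f k)). set (q := lam ^ k / INR (fact k)). set (y := (r / lam) ^ k).
    assert (Hx : 0 <= x) by apply Cmod_ge_0.
    assert (Hq : 0 < q) by (apply Rdiv_lt_0_compat; [now apply pow_lt | apply lt_0_INR, lt_O_fact]).
    assert (Hy : 0 <= y) by (apply pow_le, Rdiv_le_0_compat; lra).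
    assert (E1 : r ^ k / INR (fact k) = q * y).
    { replace r with (lam * (r / lam)) at 1 by (field; lra).
      rewrite Rpow_mult_distr. unfold q, y. field. apply INR_fact_neq_0. }
    assert (E2 : (r ^ 2 / lam) ^ k / INR (fact k) = q * (y * y)).
    { replace (r ^ 2 / lam) with (lam * (r / lam) ^ 2) by (field; lra).
      rewrite Rpow_mult_distr, <- pow_mult, Nat.mul_comm, pow_mult. unfold q, y. simpl. field.
      apply INR_fact_neq_0. }
    assert (E3 : exp lam * poisson lam k = q).
    { unfold poisson. rewrite <- Rmult_assoc, <- exp_plus, Rplus_opp_r, exp_0. fold q. ring. }
    rewrite E1, E2. split; [apply Rmult_le_pos; [|apply Rmult_le_pos]; lra|].
    replace (exp lam / 2 * (x ^ 2 * poisson lam k)) with (exp lam * poisson lam k * (x * x) / 2)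
      by (simpl; field).
    rewrite E3. pose proof (Rle_0_sqr (x - y)). unfold Rsqr in *. nra.
  - destruct Hf as [l Hl].
    eexists. exact (is_series_plus _ _ _ _ (is_series_scal_l (exp lam / 2) _ _ Hl)
                                          (is_series_scal_l (/ 2) _ _ (is_series_exp (r ^ 2 / lam)))).
Qed.

Lemma ex_series_L2_poisson_exp_bounded (f : nat -> C) lam g :
  0 < lam -> exp_bounded g ->
  ex_series (fun k => Cmod (f k) ^ 2 * poisson lam k) ->
  ex_series (fun k => Cmod (f k) * (poisson lam k * Rabs (g k))).
Proof.
  intros Hlam (M & B & HM & HB & Hg) Hf.
  apply (ex_series_nonneg_le _ (fun k => exp (- lam) * M * (Cmod (f k) * ((lam * B) ^ k / INR (fact k))))).
  - intros k. pose proof (Cmod_ge_0 (f k)). pose proof (poisson_pos lam k Hlam).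
    split; [apply Rmult_le_pos; [|apply Rmult_le_pos; [|apply Rabs_pos]]; lra|].
    replace (exp (- lam) * M * (Cmod (f k) * ((lam * B) ^ k / INR (fact k))))
      with (Cmod (f k) * (poisson lam k * (M * B ^ k)))
      by (unfold poisson; rewrite Rpow_mult_distr; field; apply INR_fact_neq_0).
    apply Rmult_le_compat_l; [lra|]. apply Rmult_le_compat_l; [lra | apply Hg].
  - apply (ex_series_scal_l (exp (- lam) * M) (fun k => Cmod (f k) * ((lam * B) ^ k / INR (fact k)))).
    apply (ex_series_L2_exp f lam); [exact Hlam | nra | exact Hf].
Qed.

Lemma Rabs_Series_tail_le (a m : nat -> R) n :
  (forall k, Rabs (a k) <= m k) -> ex_series m ->
  Rabs (Series a - sum_n a n) <= Series m - sum_n m n.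
Proof.
  intros Ham Hm.
  assert (Ha : ex_series a) by (apply (ex_series_le a m); assumption).
  assert (Htail : forall b, ex_series b -> Series b - sum_n b n = Series (fun k => b (S n + k)%nat)).
  { intros b Hb. rewrite (Series_incr_n b (S n)) by (lia || assumption).
    simpl pred. rewrite sum_n_Reals. ring. }
  rewrite !Htail by assumption.
  eapply Rle_trans; [apply Series_Rabs|].
  - apply (ex_series_nonneg_le _ (fun k => m (S n + k)%nat)); [|now apply ex_series_incr_n].
    intros k. split; [apply Rabs_pos | apply Ham].
  - apply Series_le; [intros k; split; [apply Rabs_pos | apply Ham] | now apply ex_series_incr_n].
Qed.

Lemma Cmod_CSeries_tail_le (a : nat -> C) (m : nat -> R) n :
  (forall k, Cmod (a k) <= m k) -> ex_series m ->
  Cmod (Cminus (CSeries a) (sum_n a n)) <= sqrt 2 * (Series m - sum_n m n).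
Proof.
  intros Ham Hm. eapply Rle_trans; [apply Cmod_2Rmax|].
  apply Rmult_le_compat_l; [apply sqrt_pos|].
  replace (fst (Cminus (CSeries a) (sum_n a n)))
    with (Series (fun k => fst (a k)) - sum_n (fun k => fst (a k)) n)
    by (rewrite <- sum_n_fst; reflexivity).
  replace (snd (Cminus (CSeries a) (sum_n a n)))
    with (Series (fun k => snd (a k)) - sum_n (fun k => snd (a k)) n)
    by (rewrite <- sum_n_snd; reflexivity).
  apply Rmax_lub; apply Rabs_Series_tail_le; try exact Hm; intros k; eapply Rle_trans, Ham;
    [apply Rabs_fst_le_Cmod | apply Rabs_snd_le_Cmod].
Qed.

(** * The Segal-Bargmann transform *)

Lemma pi_mass_probability alpha s :
  alpha <> 0 -> 0 < s ->
  (forall k, snd (pi_mass alpha (RtoC s) k) = 0 /\ 0 <= fst (pi_mass alpha (RtoC s) k))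
  /\ is_series (pi_mass alpha (RtoC s)) (RtoC 1).
Proof.
  intros Halpha Hs.
  assert (Hlam : 0 < s / alpha ^ 2) by (apply Rdiv_lt_0_compat; [exact Hs | rewrite <- Rsqr_pow2; now apply Rsqr_pos_lt]).
  split.
  - intros k. rewrite pi_mass_RtoC by exact Halpha. split; [reflexivity|]. left. now apply poisson_pos.
  - apply is_series_C_ext with (fun k => RtoC (poisson (s / alpha ^ 2) k));
      [intros k; now rewrite pi_mass_RtoC | apply is_series_RtoC, is_series_poisson].
Qed.


Section SegalBargmann.

Variables (alpha sigma : R) (a : nat -> nat -> R) (f : nat -> C).
Hypotheses (halpha : 0 < alpha) (hsigma : 0 < sigma).
Hypothesis horth : orthogonal_wrt alpha sigma (monic_poly a).
Hypothesis hf : in_L2 alpha sigma f.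

Local Notation lam := (sigma / alpha ^ 2).
Local Notation param z := (Cdiv (Cplus (RtoC sigma) (Cmult (RtoC alpha) z)) (RtoC (alpha ^ 2))).

Lemma lam_pos : 0 < lam.
Proof. apply Rdiv_lt_0_compat; [exact hsigma | now apply pow_lt]. Qed.

Lemma in_L2_poisson : ex_series (fun k => Cmod (f k) ^ 2 * poisson lam k).
Proof.
  apply ex_series_R_ext with (2 := hf). intros k. rewrite pi_mass_RtoC by lra. reflexivity.
Qed.

Lemma Cmod_param_le z : Cmod (param z) <= lam + Cmod z / alpha.
Proof.
  assert (Ha2 : 0 < alpha ^ 2) by (now apply pow_lt).
  rewrite Cmod_div, Cmod_R, Rabs_pos_eq by (lra || apply RtoC_neq_0; lra).
  apply Rle_trans with ((sigma + alpha * Cmod z) / alpha ^ 2); [|right; field; lra].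
  apply Rmult_le_compat_r; [left; now apply Rinv_0_lt_compat|].
  eapply Rle_trans; [apply Cmod_triangle|]. rewrite Cmod_mult, !Cmod_R, !Rabs_pos_eq by lra. lra.
Qed.

Lemma Cmod_rhs_term z n :
  Cmod (rhs_term alpha sigma f z n) = Cmod (f n) * (Cmod (param z) ^ n / INR (fact n)).
Proof.
  change (Cmod (f n * exp_term (param z) n)%C = Cmod (f n) * (Cmod (param z) ^ n / INR (fact n))).
  rewrite Cmod_mult, Cmod_exp_term. reflexivity.
Qed.

Lemma ex_series_Cmod_rhs_term z : ex_series (fun n => Cmod (rhs_term alpha sigma f z n)).
Proof.
  apply ex_series_R_ext with (fun n => Cmod (f n) * (Cmod (param z) ^ n / INR (fact n)));
    [intros n; symmetry; apply Cmod_rhs_term|].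
  apply (ex_series_L2_exp f lam); [apply lam_pos | apply Cmod_ge_0 | apply in_L2_poisson].
Qed.

Lemma rhs_series_uniform r eps :
  0 < eps ->
  exists N : nat, forall (n : nat) (z : C), (N <= n)%nat -> Cmod z <= r ->
    Cmod (Cminus (CSeries (rhs_term alpha sigma f z)) (sum_n (rhs_term alpha sigma f z) n)) < eps.
Proof.
  intros Heps.
  set (W := lam + Rabs r / alpha).
  assert (HW : 0 <= W).
  { pose proof lam_pos. assert (0 <= Rabs r / alpha) by (apply Rdiv_le_0_compat; [apply Rabs_pos | lra]).
    unfold W. lra. }
  set (m := fun k => Cmod (f k) * (W ^ k / INR (fact k))).
  assert (Hm : ex_series m) by (apply (ex_series_L2_exp f lam); [apply lam_pos | exact HW | apply in_L2_poisson]).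
  assert (Hsqrt2 : 0 < sqrt 2) by (apply sqrt_lt_R0; lra).
  assert (Heps' : 0 < eps / sqrt 2) by (apply Rdiv_lt_0_compat; assumption).
  destruct (proj1 (filterlim_locally _ _) (Series_correct _ Hm) (mkposreal _ Heps')) as [N HN].
  exists N. intros n z Hn Hz.
  eapply Rle_lt_trans; [apply (Cmod_CSeries_tail_le _ m); [|exact Hm]|].
  - intros k. rewrite Cmod_rhs_term. unfold m.
    apply Rmult_le_compat_l; [apply Cmod_ge_0|].
    apply Rmult_le_compat_r; [left; apply Rinv_0_lt_compat, lt_0_INR, lt_O_fact|].
    apply pow_incr. split; [apply Cmod_ge_0|].
    eapply Rle_trans; [apply Cmod_param_le|]. unfold W. apply Rplus_le_compat_l.
    apply Rmult_le_compat_r; [left; now apply Rinv_0_lt_compat|].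
    eapply Rle_trans; [exact Hz | apply Rle_abs].
  - specialize (HN n Hn). change (Rabs (sum_n m n - Series m) < eps / sqrt 2) in HN.
    rewrite Rabs_minus_sym in HN. pose proof (Rle_abs (Series m - sum_n m n)).
    apply Rmult_lt_reg_r with (/ sqrt 2); [now apply Rinv_0_lt_compat|].
    replace (sqrt 2 * (Series m - sum_n m n) * / sqrt 2) with (Series m - sum_n m n) by (field; lra).
    unfold Rdiv in HN. lra.
Qed.

Local Notation u z := (RtoC (alpha / sigma) * z)%C.

Lemma param_eq z : param z = (RtoC lam * (1 + u z))%C.
Proof.
  rewrite !RtoC_div by (try apply pow_nonzero; lra). rewrite !RtoC_pow.
  field. split; apply RtoC_neq_0; lra.
Qed.

(* Summing over [k] gives [coef n * z^n]; summing over [n] gives the [k]-th term of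
   [f * pi_(alpha, sigma + alpha z)]. *)
Definition double_term (z : C) (k n : nat) : C :=
  (f k * RtoC (poisson lam k * charlier (- lam) n k) * exp_term (u z) n)%C.

Lemma is_series_double_term_row z k :
  is_series (double_term z k) (Cexp (Copp (param z)) * rhs_term alpha sigma f z k)%C.
Proof.
  replace (Cexp (Copp (param z)) * rhs_term alpha sigma f z k)%C
    with (f k * RtoC (poisson lam k) * (Cpow (1 + u z) k * Cexp (RtoC (- lam) * u z)))%C.
  - apply is_series_C_ext
      with (fun n => f k * RtoC (poisson lam k) * (RtoC (charlier (- lam) n k) * exp_term (u z) n))%C.
    + intros n. unfold double_term. rewrite RtoC_mult. ring.
    + exact (is_series_scal_l _ _ _ (is_series_charlier_gen (- lam) (u z) k)).
  - change (rhs_term alpha sigma f z k) with (f k * exp_term (param z) k)%C.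
    rewrite param_eq.
    replace (Copp (RtoC lam * (1 + u z)))%C with (RtoC (- lam) + RtoC (- lam) * u z)%C
      by (rewrite RtoC_opp; ring).
    rewrite Cexp_plus, Cexp_RtoC, exp_term_mult_l. unfold poisson, exp_term.
    rewrite !RtoC_mult, RtoC_div, RtoC_pow by apply INR_fact_neq_0.
    field. apply RtoC_INR_fact_neq_0.
Qed.

Lemma Cmod_double_term_le z k n :
  Cmod (double_term z k n)
  <= Cmod (f k) * poisson lam k * (charlier lam n k * (Cmod (u z) ^ n / INR (fact n))).
Proof.
  pose proof (poisson_pos lam k lam_pos) as Hpos.
  unfold double_term. rewrite Cmod_mult, Cmod_exp_term, Cmod_mult, Cmod_R, Rabs_mult, (Rabs_pos_eq (poisson _ _)) by lra.
  assert (Hch : Rabs (charlier (- lam) n k) <= charlier lam n k).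
  { eapply Rle_trans; [apply Rabs_charlier_le|]. rewrite Rabs_Ropp, Rabs_pos_eq by (pose proof lam_pos; lra). lra. }
  assert (HY : 0 <= Cmod (u z) ^ n / INR (fact n))
    by (apply Rdiv_le_0_compat; [apply pow_le, Cmod_ge_0 | apply lt_0_INR, lt_O_fact]).
  pose proof (Cmod_ge_0 (f k)).
  rewrite <- !Rmult_assoc. apply Rmult_le_compat_r; [exact HY|].
  apply Rmult_le_compat_l; [apply Rmult_le_pos; lra | exact Hch].
Qed.

Lemma is_series_double_term_bound z k :
  is_series (fun n => Cmod (f k) * poisson lam k * (charlier lam n k * (Cmod (u z) ^ n / INR (fact n))))
            (Cmod (f k) * poisson lam k * ((1 + Cmod (u z)) ^ k * exp (lam * Cmod (u z)))).
Proof. apply (is_series_scal_l (V := R_NormedModule)), is_series_charlier_gen_R. Qed.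

Lemma ex_series_double_term_row z k : ex_series (fun n => Cmod (double_term z k n)).
Proof.
  apply (ex_series_nonneg_le _
    (fun n => Cmod (f k) * poisson lam k * (charlier lam n k * (Cmod (u z) ^ n / INR (fact n))))).
  - intros n. split; [apply Cmod_ge_0 | apply Cmod_double_term_le].
  - eexists. apply is_series_double_term_bound.
Qed.

Lemma ex_series_double_term z : ex_series (fun k => Series (fun n => Cmod (double_term z k n))).
Proof.
  set (t := Cmod (u z)).
  apply (ex_series_nonneg_le _
    (fun k => exp (lam * t) * exp (- lam) * (Cmod (f k) * ((lam * (1 + t)) ^ k / INR (fact k))))).
  - intros k. split;
      [apply Series_nonneg; [intros; apply Cmod_ge_0 | apply ex_series_double_term_row]|].
    eapply Rle_trans.
    + apply Series_le; [intros n; split; [apply Cmod_ge_0 | apply Cmod_double_term_le]|].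
      eexists. apply is_series_double_term_bound.
    + rewrite (is_series_unique _ _ (is_series_double_term_bound z k)). fold t.
      unfold poisson. rewrite Rpow_mult_distr. right. field. apply INR_fact_neq_0.
  - apply (ex_series_scal_l (exp (lam * t) * exp (- lam))
             (fun k => Cmod (f k) * ((lam * (1 + t)) ^ k / INR (fact k)))).
    apply (ex_series_L2_exp f lam); [apply lam_pos | | apply in_L2_poisson].
    assert (Ht : 0 <= t) by apply Cmod_ge_0. pose proof lam_pos. nra.
Qed.

Lemma CSeries_monic_poly_sq n :
  CSeries (fun k => Cmult (RtoC (monic_poly a n (alpha * INR k) ^ 2)) (pi_mass alpha (RtoC sigma) k))
  = RtoC (sigma ^ n * INR (fact n)).
Proof.
  apply CSeries_unique.
  apply is_series_C_ext with (fun k => RtoC (alpha ^ n * alpha ^ n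
                   * (poisson lam k * charlier (- lam) n k * charlier (- lam) n k))).
  { intros k. rewrite pi_mass_RtoC, (monic_poly_eq_charlier alpha sigma a halpha hsigma horth) by lra.
    rewrite <- RtoC_mult. f_equal. ring. }
  replace (sigma ^ n * INR (fact n)) with (alpha ^ n * alpha ^ n * (lam ^ n * INR (fact n))).
  - apply is_series_RtoC, (is_series_scal_l (V := R_NormedModule)), is_series_poisson_charlier_sq.
    pose proof lam_pos. lra.
  - rewrite <- Rmult_assoc, <- !Rpow_mult_distr. f_equal. f_equal. field. lra.
Qed.

Lemma coef_Cpow_eq z n :
  (coef alpha sigma (monic_poly a) f n * Cpow z n)%C = CSeries (fun k => double_term z k n).
Proof.
  symmetry. apply CSeries_unique.
  set (num := CSeries (fun k => Cmult (Cmult (f k) (RtoC (monic_poly a n (alpha * INR k))))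
                                      (pi_mass alpha (RtoC sigma) k))).
  assert (Hnum : is_series (fun k => Cmult (Cmult (f k) (RtoC (monic_poly a n (alpha * INR k))))
                                           (pi_mass alpha (RtoC sigma) k)) num).
  { apply is_series_C_abs.
    apply ex_series_R_ext
      with (fun k => Cmod (f k) * (poisson lam k * Rabs (monic_poly a n (alpha * INR k)))).
    - intros k. rewrite pi_mass_RtoC by lra. rewrite !Cmod_mult, !Cmod_R.
      rewrite (Rabs_pos_eq (poisson _ _)) by (left; apply poisson_pos, lam_pos). ring.
    - apply ex_series_L2_poisson_exp_bounded; [apply lam_pos | apply exp_bounded_monic_poly | apply in_L2_poisson]. }
  assert (Han : RtoC (alpha ^ n) <> 0%C) by (apply RtoC_neq_0, pow_nonzero; lra).
  assert (Hsn : RtoC (sigma ^ n) <> 0%C) by (apply RtoC_neq_0, pow_nonzero; lra).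
  unfold coef. rewrite CSeries_monic_poly_sq. fold num.
  replace (Cdiv num (RtoC (sigma ^ n * INR (fact n))) * Cpow z n)%C
    with (exp_term (u z) n / RtoC (alpha ^ n) * num)%C.
  - apply is_series_C_ext with (fun k => exp_term (u z) n / RtoC (alpha ^ n)
        * Cmult (Cmult (f k) (RtoC (monic_poly a n (alpha * INR k)))) (pi_mass alpha (RtoC sigma) k))%C;
      [|exact (is_series_scal_l _ _ _ Hnum)].
    intros k. unfold double_term.
    rewrite pi_mass_RtoC, (monic_poly_eq_charlier alpha sigma a halpha hsigma horth) by lra.
    rewrite !RtoC_mult. field. exact Han.
  - rewrite exp_term_mult_l. unfold exp_term.
    rewrite <- RtoC_pow. unfold Rdiv at 1. rewrite Rpow_mult_distr, pow_inv, !RtoC_mult, RtoC_inv by (apply pow_nonzero; lra).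
    field. repeat split; [apply RtoC_INR_fact_neq_0 | exact Hsn | exact Han].
Qed.

Lemma SB_transform_eq z :
  SB_transform alpha sigma (monic_poly a) f z
  = (Cexp (Copp (param z)) * CSeries (rhs_term alpha sigma f z))%C.
Proof.
  unfold SB_transform. rewrite (CSeries_ext _ _ (coef_Cpow_eq z)).
  rewrite (CSeries_unique _ _ (CSeries_fubini (double_term z)
             (ex_series_double_term_row z) (ex_series_double_term z))).
  rewrite (CSeries_ext _ _ (fun k => CSeries_unique _ _ (is_series_double_term_row z k))).
  apply CSeries_unique.
  exact (is_series_scal_l _ _ _ (is_series_C_abs _ (ex_series_Cmod_rhs_term z))).
Qed.

Lemma is_series_pi_mass_SB_transform z :
  is_series (fun k => Cmult (f k) (pi_mass alpha (Cplus (RtoC sigma) (Cmult (RtoC alpha) z)) k))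
            (SB_transform alpha sigma (monic_poly a) f z).
Proof.
  rewrite SB_transform_eq.
  apply is_series_C_ext with (fun k => Cexp (Copp (param z)) * rhs_term alpha sigma f z k)%C.
  - intros k. unfold rhs_term, pi_mass. cbv zeta. ring.
  - exact (is_series_scal_l _ _ _ (is_series_C_abs _ (ex_series_Cmod_rhs_term z))).
Qed.

End SegalBargmann.

Theorem theorem4p2 (alpha sigma : R) (a : nat -> nat -> R)
  (halpha : 0 < alpha) (hsigma : 0 < sigma)
  (horth : orthogonal_wrt alpha sigma (monic_poly a))
  (f : nat -> Complex.C) (hf : in_L2 alpha sigma f) :
  (* (S f)(z) = integral of f against pi_{alpha, sigma + alpha z} *)
  (forall z : Complex.C,
     is_series (fun k => Cmult (f k)
                  (pi_mass alpha (Cplus (RtoC sigma) (Cmult (RtoC alpha) z)) k))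
               (SB_transform alpha sigma (monic_poly a) f z)
   /\ SB_transform alpha sigma (monic_poly a) f z =
        Cmult (Cexp (Copp (Cdiv (Cplus (RtoC sigma) (Cmult (RtoC alpha) z))
                                (RtoC (alpha ^ 2)))))
              (CSeries (rhs_term alpha sigma f z)))
  (* for real z > -sigma/alpha, pi_{alpha, sigma + alpha z} is a probability *)
  /\ (forall x : R, - sigma / alpha < x ->
        (forall k, snd (pi_mass alpha (RtoC (sigma + alpha * x)) k) = 0
                   /\ 0 <= fst (pi_mass alpha (RtoC (sigma + alpha * x)) k))
        /\ is_series (pi_mass alpha (RtoC (sigma + alpha * x))) (RtoC 1))
  (* absolute convergence of the right-hand series *)
  /\ (forall z : Complex.C, ex_series (fun n => Cmod (rhs_term alpha sigma f z n)))
  (* uniform convergence on compact sets (every compact set lies in a disk) *)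
  /\ (forall r eps : R, 0 < eps ->
        exists N : nat, forall (n : nat) (z : Complex.C), (N <= n)%nat -> Cmod z <= r ->
          Cmod (Cminus (CSeries (rhs_term alpha sigma f z))
                       (sum_n (rhs_term alpha sigma f z) n)) < eps).
Proof.
  split; [|split; [|split]].
  - intros z. split.
    + now apply is_series_pi_mass_SB_transform.
    + now apply SB_transform_eq.
  - intros x Hx. apply pi_mass_probability; [lra|].
    apply Rmult_lt_compat_l with (r := alpha) in Hx; [|exact halpha].
    replace (alpha * (- sigma / alpha)) with (- sigma) in Hx by (field; lra). lra.
  - now apply ex_series_Cmod_rhs_term.
  - now apply rhs_series_uniform.
Qed.
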